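(* Let $\mathcal{N}=(D,P)$ be a broadcast network with client $P=(Q,I,\delta)$, let $G$ be its associated graph, and let $V_1,V_2$ be vertices of $G$. There is a path from $V_1$ to $V_2$ in $G$ if and only if there is a path in normal form from $V_1$ to $V_2$ in $G$.
   Context: A broadcast network is a pair $\mathcal{N}=(D,P)$ where $D$ is a finite set of messages and $P=(Q,I,\delta)$ is a finite automaton with transition relation $\delta\subseteq Q\times \mathrm{Ops}(D)\times Q$, $\mathrm{Ops}(D)=\{!a,\ ?a : a\in D\}$; write $q\xrightarrow{o}q'$ for $(q,o,q')\in\delta$. For $S\subseteq Q$ and $a\in D$ let $\mathrm{Post}_{?a}(S)=\{r'\in Q: \exists r\in S,\ r\xrightarrow{?a}r'\}$ and $\mathrm{Enabled}_{?a}(S)=\{r\in S : \mathrm{Post}_{?a}(\{r\})\neq\emptyset\}$. The graph $G=(V,\to_G)$ has vertex set $V=\bigcup_{k\le|Q|}(2^Q)^k$. There is an edge $(S_1,\dots,S_k)\to_G(S'_1,\dots,S'_k)$ iff: (1) there are $j\in[1..k]$, $s\in S_j$, $s'\in S'_j$, $a\in D$ with $s\xrightarrow{!a}s'$; (2) for each $i\in[1..k]$ there are $\mathrm{Gen}_i\subseteq\mathrm{Post}_{?a}(S_i)$ and $\mathrm{Kill}_i\subseteq\mathrm{Enabled}_{?a}(S_i)$ such that $S'_i=(S_i\setminus\mathrm{Kill}_i)\cup\mathrm{Gen}_i$ for $i\neq j$ and $S'_j=(U_j\setminus\mathrm{Kill}_j)\cup\mathrm{Gen}_j\cup\{s'\}$,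 where $U_j$ is either $S_j$ or $S_j\setminus\{s\}$; (3) for each $i$ and each $q\in\mathrm{Kill}_i$, $\mathrm{Post}_{?a}(\{q\})\cap\mathrm{Gen}_i\neq\emptyset$. A path is a finite sequence of vertices with consecutive ones joined by edges (possibly of length zero). A path $W_1\to_G\cdots\to_G W_n$ is in normal form if there is $m\in[1..n]$ such that $W_i\sqsubseteq W_{i+1}$ for all $i\in[1..m-1]$ and $W_i\sqsupseteq W_{i+1}$ for all $i\in[m..n-1]$, where $\sqsubseteq$ is componentwise inclusion of tuples of sets. *)

From mathcomp Require Import all_boot.
Set Implicit Arguments. Unset Strict Implicit. Unset Printing Implicit Defensive.

Inductive op (D : Type) := Send of D | Recv of D.
Arguments Send {D}. Arguments Recv {D}.

Section BN.
Variables (D Q : finType) (delta : Q -> op D -> Q -> bool).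

Definition post (a : D) (S : {set Q}) : {set Q} :=
  [set r' | [exists r in S, delta r (Recv a) r']].

Definition enabled (a : D) (S : {set Q}) : {set Q} :=
  [set r in S | post a [set r] != set0].

Definition vertex (W : seq {set Q}) : Prop := size W <= #|Q|.

(* edges of G; components are 0-indexed, i < k corresponds to i+1 in [1..k] *)
Definition edge (W W' : seq {set Q}) : Prop :=
  vertex W /\ vertex W' /\ size W = size W' /\
  exists (j : nat) (s s' : Q) (a : D),
    [/\ j < size W, s \in nth set0 W j, s' \in nth set0 W' j,
        delta s (Send a) s' &
        exists (Gen Kill : nat -> {set Q}) (removeS : bool),
          forall i, i < size W ->
            [/\ Gen i \subset post a (nth set0 W i),
                Kill i \subset enabled a (nth set0 W i),
                (forall q, q \in Kill i -> post a [set q] :&: Gen i != set0) &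
                if i == j then
                  nth set0 W' i =
                    ((if removeS then nth set0 W i :\ s else nth set0 W i)
                       :\: Kill i) :|: Gen i :|: [set s']
                else nth set0 W' i = (nth set0 W i :\: Kill i) :|: Gen i]].

(* a path W_1 -> ... -> W_n is represented by the list W_1 :: ws *)
Fixpoint is_path (W : seq {set Q}) (ws : seq (seq {set Q})) : Prop :=
  match ws with
  | [::] => vertex W
  | W' :: ws' => edge W W' /\ is_path W' ws'
  end.

Definition tle (W W' : seq {set Q}) : Prop :=
  size W = size W' /\ forall i, i < size W -> nth set0 W i \subset nth set0 W' i.

Definition path_from_to (V1 V2 : seq {set Q}) : Prop :=
  exists ws, is_path V1 ws /\ last V1 ws = V2.

Definition normal_form (ps : seq (seq {set Q})) : Prop :=
  exists m, m < size ps /\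
    forall i, i.+1 < size ps ->
      (i < m -> tle (nth [::] ps i) (nth [::] ps i.+1)) /\
      (m <= i -> tle (nth [::] ps i.+1) (nth [::] ps i)).

Definition nf_path_from_to (V1 V2 : seq {set Q}) : Prop :=
  exists ws, [/\ is_path V1 ws, last V1 ws = V2 & normal_form (V1 :: ws)].

End BN.

From mathcomp Require Import all_boot.
Set Implicit Arguments. Unset Strict Implicit. Unset Printing Implicit Defensive.

(* Edges are monotone under componentwise union with a fixed tuple A: a move
   W -> W' is also a move A ∪ W -> A ∪ W', killing only the states that A does
   not already contain and removing the sender s only if A lacks it.  Given a
   path X_0 -> ... -> X_n, put U_k = X_k ∪ ... ∪ X_n.  Lifting the path by
   unions yields the increasing path X_0 ⊑ X_0 ∪ X_1 ⊑ ... ⊑ U_0 and the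
   decreasing path U_0 = X_0 ∪ U_1 ⊒ U_1 ⊒ ... ⊒ U_n = X_n; their
   concatenation is a path in normal form. *)

Fixpoint chain (T : Type) (R : T -> T -> Prop) (x : T) (s : seq T) : Prop :=
  if s is y :: s' then R x y /\ chain R y s' else True.

Lemma chain_map (T U : Type) (R : T -> T -> Prop) (R' : U -> U -> Prop)
    (f : T -> U) x s :
  (forall a b, R a b -> R' (f a) (f b)) -> chain R x s -> chain R' (f x) (map f s).
Proof. by move=> homR; elim: s x => //= y s IHs x [/homR Rxy /IHs]. Qed.

Lemma chain_nth (T : Type) (R : T -> T -> Prop) (x0 x : T) (s : seq T) :
  chain R x s -> forall i, i < size s -> R (nth x0 (x :: s) i) (nth x0 (x :: s) i.+1).
Proof. by elim: s x => //= y s IHs x [Rxy /IHs chain_s] [|i] //= /chain_s. Qed.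

Section UnionOfTuples.
Variable Q : finType.
Implicit Types A W : seq {set Q}.

Definition tunion A W : seq {set Q} :=
  mkseq (fun i => nth set0 A i :|: nth set0 W i) (size A).

Lemma size_tunion A W : size (tunion A W) = size A.
Proof. exact: size_mkseq. Qed.

Lemma nth_tunion A W i : i < size A ->
  nth set0 (tunion A W) i = nth set0 A i :|: nth set0 W i.
Proof. exact: nth_mkseq. Qed.

Lemma tle_nth W W' i : tle W W' -> nth set0 W i \subset nth set0 W' i.
Proof.
case=> eq_size sub; have [/sub // | le_W_i] := ltnP i (size W).
by rewrite nth_default ?sub0set.
Qed.

Lemma tle_refl W : tle W W.
Proof. by split. Qed.

Lemma tle_tunionl A W : tle A (tunion A W).
Proof. by split=> [|i lt_i]; rewrite ?size_tunion ?nth_tunion ?subsetUl. Qed.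

Lemma tle_tunionr A W : size A = size W -> tle W (tunion A W).
Proof.
move=> eq_size; split=> [|i lt_i]; first by rewrite size_tunion.
by rewrite nth_tunion ?eq_size ?subsetUr.
Qed.

Lemma tle_tunion2l A W W' : tle W W' -> tle (tunion A W) (tunion A W').
Proof.
move=> leW; split=> [|i]; rewrite !size_tunion // => lt_i.
by rewrite !nth_tunion // setUS // tle_nth.
Qed.

Lemma tunionC A W : size A = size W -> tunion A W = tunion W A.
Proof.
move=> eq_size; apply: (@eq_from_nth _ set0); rewrite !size_tunion // => i lt_i.
by rewrite !nth_tunion -?eq_size // setUC.
Qed.

Lemma tunion_absorb A W : tle W A -> tunion A W = A.
Proof.
move=> leWA; apply: (@eq_from_nth _ set0); rewrite size_tunion // => i lt_i.
by rewrite nth_tunion //; apply/setUidPl/tle_nth.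
Qed.

End UnionOfTuples.

Section SetAlgebra.
Variable Q : finType.
Implicit Types A S K : {set Q}.

Lemma setU_setD A S K : A :|: (S :\: K) = (A :|: S) :\: (K :\: A).
Proof.
by apply/setP=> x; rewrite !inE; case: (x \in A); case: (x \in S); case: (x \in K).
Qed.

Lemma setU_setD1 A S (s : Q) (b : bool) :
  A :|: (if b then S :\ s else S) = if b && (s \notin A) then (A :|: S) :\ s else A :|: S.
Proof.
case: b => //=; have [sA | sNA] /= := boolP (s \in A); apply/setP=> x; rewrite !inE.
  by have [-> | //] := eqVneq x s; rewrite sA.
by have [-> | //] := eqVneq x s; rewrite (negbTE sNA).
Qed.

End SetAlgebra.

Section Paths.
Variables (D Q : finType) (delta : Q -> op D -> Q -> bool).
Implicit Types (A W X Y : seq {set Q}) (ws ps : seq (seq {set Q})).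

Lemma post_mono a (S T : {set Q}) :
  S \subset T -> post delta a S \subset post delta a T.
Proof.
move=> sub; apply/subsetP=> x; rewrite !inE => /existsP [r /andP [rS d]].
by apply/existsP; exists r; rewrite (subsetP sub).
Qed.

Lemma enabled_mono a (S T : {set Q}) :
  S \subset T -> enabled delta a S \subset enabled delta a T.
Proof.
by move=> sub; apply/subsetP=> x; rewrite !inE => /andP [/(subsetP sub) -> ->].
Qed.

Lemma edge_size W W' : edge delta W W' -> size W = size W'.
Proof. by case=> _ [_ []]. Qed.

Lemma edge_tunion A W W' :
  size A = size W -> edge delta W W' -> edge delta (tunion A W) (tunion A W').
Proof.
move=> eq_size [vW [vW' [eq_size' [j [s [s' [a [lt_j s_in s'_in send]]]]]]]].
case=> Gen [Kill [removeS step]].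
rewrite /edge /vertex !size_tunion eq_size; do 3!split=> //.
exists j, s, s', a; split=> //; rewrite ?nth_tunion ?eq_size ?inE ?s_in ?s'_in ?orbT //.
exists Gen, (fun i => Kill i :\: nth set0 A i), (removeS && (s \notin nth set0 A j)).
move=> i lt_i; have [genP killP killG stepE] := step i lt_i.
rewrite !nth_tunion ?eq_size //; split.
- exact: subset_trans genP (post_mono _ (subsetUr _ _)).
- exact: subset_trans (subsetDl _ _) (subset_trans killP (enabled_mono _ (subsetUr _ _))).
- by move=> q /setDP [/killG].
- by case: eqP stepE => [-> | _] ->; rewrite !setUA setU_setD ?setU_setD1.
Qed.

Lemma is_path_tunion A X ws :
  size A = size X -> is_path delta X ws ->
  is_path delta (tunion A X) (map (tunion A) ws).
Proof.
elim: ws X => [|Y ws IHws] X eq_size /=; first by rewrite /vertex size_tunion eq_size.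
by case=> e p; split; [exact: edge_tunion | apply: IHws p; rewrite eq_size (edge_size e)].
Qed.

Lemma is_path_cat X ps1 ps2 :
  is_path delta X ps1 -> is_path delta (last X ps1) ps2 -> is_path delta X (ps1 ++ ps2).
Proof. by elim: ps1 X => [|Y ps1 IHps] X //= [e p] /(IHps _ p). Qed.

Fixpoint path_union X ws : seq {set Q} :=
  if ws is Y :: ws' then tunion X (path_union Y ws') else X.

Lemma size_path_union X ws : size (path_union X ws) = size X.
Proof. by case: ws => [|Y ws] //=; rewrite size_tunion. Qed.

Lemma tle_path_union X ws : tle X (path_union X ws).
Proof. by case: ws => [|Y ws]; [exact: tle_refl | exact: tle_tunionl]. Qed.

Lemma increasing_path_to_union X ws : is_path delta X ws ->
  exists ps, [/\ is_path delta X ps, last X ps = path_union X ws & chain (@tle Q) X ps].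
Proof.
elim: ws X => [|Y ws IHws] X /=; first by exists [::].
case=> e /IHws [ps [p_ps last_ps up_ps]].
exists (tunion X Y :: map (tunion X) ps); split=> /=.
- split; last exact: is_path_tunion (edge_size e) p_ps.
  by rewrite -{1}(tunion_absorb (tle_refl X)); apply: edge_tunion.
- by rewrite last_map last_ps.
- by split; [exact: tle_tunionl | exact: chain_map (@tle_tunion2l Q X) up_ps].
Qed.

Lemma decreasing_path_from_union X ws : is_path delta X ws ->
  exists ps, [/\ is_path delta (path_union X ws) ps, last (path_union X ws) ps = last X ws
               & chain (fun W W' => tle W' W) (path_union X ws) ps].
Proof.
elim: ws X => [|Y ws IHws] X /=; first by exists [::].
case=> e /IHws [ps [p_ps last_ps down_ps]].
have eq_size : size X = size (path_union Y ws) by rewrite size_path_union (edge_size e).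
exists (path_union Y ws :: ps); split=> //=; split=> //; last exact: tle_tunionr.
rewrite tunionC // -{2}(tunion_absorb (tle_path_union Y ws)).
exact: edge_tunion.
Qed.

End Paths.

Section NormalForm.
Variable Q : finType.
Implicit Types (X Y : seq {set Q}) (ps : seq (seq {set Q})).

Lemma normal_form_decreasing X ps :
  chain (fun W W' => tle W' W) X ps -> normal_form (X :: ps).
Proof.
by move=> down; exists 0; split=> // i lt_i; split=> // _; exact: (chain_nth [::] down).
Qed.

Lemma normal_form_cons X Y ps :
  tle X Y -> normal_form (Y :: ps) -> normal_form (X :: Y :: ps).
Proof.
by move=> leXY [m [lt_m nfY]]; exists m.+1; split=> // -[|i] lt_i; [split | exact: nfY].
Qed.

Lemma normal_form_cat X ps1 ps2 :
  chain (@tle Q) X ps1 -> chain (fun W W' => tle W' W) (last X ps1) ps2 ->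
  normal_form (X :: ps1 ++ ps2).
Proof.
elim: ps1 X => [|Y ps1 IHps] X /=; first by move=> _ /normal_form_decreasing.
by case=> leXY up /(IHps _ up); exact: normal_form_cons.
Qed.

End NormalForm.

Theorem lemma3 (D Q : finType) (I : {set Q}) (delta : Q -> op D -> Q -> bool)
    (V1 V2 : seq {set Q}) :
  vertex V1 -> vertex V2 ->
  (path_from_to delta V1 V2 <-> nf_path_from_to delta V1 V2).
Proof.
move=> _ _; split; last by case=> ws [p_ws last_ws _]; exists ws.
case=> ws [p_ws <-].
have [ps1 [p_ps1 last_ps1 up]] := increasing_path_to_union p_ws.
have [ps2 [p_ps2 last_ps2 down]] := decreasing_path_from_union p_ws.
exists (ps1 ++ ps2); split.
- by apply: is_path_cat; rewrite // last_ps1.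
- by rewrite last_cat last_ps1.
- by apply: normal_form_cat; rewrite // last_ps1.
Qed.
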